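(* Assume (A1), (A2) and (A3), and let $\alpha>0$ be arbitrary. Along every trajectory of the algorithm described in the context, for all $k\ge0$, $$V_{\bar x}(k+1)-V_{\bar x}(k)\le-l\|\bm e_{\bar x}(k)\|^2+\beta_{\bar x\psi}\|\bm e_\psi(k)\|^2+\beta_{\bar x\xi}\|\bm e_\xi(k)\|^2+\alpha\max_ib_{1i}\big(\|\bm e_\psi(k)\|^2+\|\bm e_\xi(k)\|^2+N\|\bm e_{\bar x}(k)\|^2\big).$$
   Context: Game. $N$ coalitions; coalition $i$ has agents $i1,\dots,in_i$; $\mathcal V_i=\{i1,\dots,in_i\}$, $\mathcal V=\bigcup_i\mathcal V_i$, $n_{\mathrm{sum}}=\sum_in_i$; agents ordered lexicographically. Agent $ij$ has state $x_{ij}\in\mathbb{R}$; $\bm x_i=(x_{i1},\dots,x_{in_i})^T$, $\bm x=(\bm x_1^T,\dots,\bm x_N^T)^T$. Costs $f_{ij}:\mathbb{R}^{n_{\mathrm{sum}}}\to\mathbb{R}$, $f_i=\sum_jf_{ij}$. For $\bm y\in\mathbb{R}^N$, $g_i(\bm y)=f_i((y_1\mathbf 1_{n_1}^T,\dots,y_N\mathbf 1_{n_N}^T)^T)$, $\mathcal Q(\bm y)=(\partial g_i/\partial y_i(\bm y))_{i=1}^N$; $\bm y^*$ is the (unique) Nash equilibrium of the game $\min_{y_i}g_i(\bm y)$, $i=1,\dots,N$. Graph. Directed graph $\mathcal G=(\mathcal V,\mathcal E)$, $(pq,ij)\in\mathcal E$ meaning $ij$ receives from $pq$. $a_{ij}^{pq}=1$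 if $(pq,ij)\in\mathcal E$, $pq\ne ij$, else $0$; $d_{ij}=\sum_{pq}a_{ij}^{pq}$. $\mathcal G_i$: subgraph induced on $\mathcal V_i$. $\mathcal N_{ij}^{\mathrm{in}}$, $\mathcal N_{ij}^{i\text{-in}}$, $\mathcal N_{ij}^{i\text{-out}}$: in-neighbors in $\mathcal G$, in-neighbors and out-neighbors in $\mathcal G_i$. Assumptions. (A1) $\mathcal G$ and every $\mathcal G_i$ are strongly connected. (A2) each $f_{ij}$ is convex, $C^2$, with $\nabla f_{ij}$ Lipschitz of constant $l_{ij}$. (A3) $\exists l>0$: $(\bm a-\bm b)^T(\mathcal Q(\bm a)-\mathcal Q(\bm b))\ge l\|\bm a-\bm b\|^2$ for all $\bm a,\bm b\in\mathbb{R}^N$. Algorithm. Weights $r_{ij}^{im}>0$ for $im\in\mathcal N_{ij}^{i\text{-in}}\cup\{ij\}$ summing to 1, $c_{im}^{ij}>0$ for $im\in\mathcal N_{ij}^{i\text{-out}}\cup\{ij\}$ summing to 1, other within-coalition weights $0$; $R_i=[r_{ij}^{im}]$, $C_i=[c_{ij}^{im}]$ ($j$ row, $m$ column). Step size $\alpha>0$. Initialization: $x_{ij}(0),\bm\xi_{ij}(0)\in\mathbb{R}^{n_{\mathrm{sum}}}$ arbitrary, $\psi_{ij}^{il}(0)=\frac{\partial f_{ij}}{\partial x_{il}}(\bm\xi_{ij}(0))$. For $k\ge0$: $x_{ij}(k+1)=\sum_mr_{ij}^{im}x_{im}(k)-\frac{\alpha}{n_i}\sum_{m=1}^{n_i}\psi_{ij}^{im}(k)$;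 $\xi_{ij}^{pq}(k+1)=\xi_{ij}^{pq}(k)-\frac1{d_{ij}+a_{ij}^{pq}}\big(\sum_{lm\in\mathcal N_{ij}^{\mathrm{in}}}(\xi_{ij}^{pq}(k)-\xi_{lm}^{pq}(k))+a_{ij}^{pq}(\xi_{ij}^{pq}(k)-x_{pq}(k))\big)$ for all $pq\in\mathcal V$; $\psi_{ij}^{il}(k+1)=\sum_mc_{ij}^{im}\psi_{im}^{il}(k)+\frac{\partial f_{ij}}{\partial x_{il}}(\bm\xi_{ij}(k+1))-\frac{\partial f_{ij}}{\partial x_{il}}(\bm\xi_{ij}(k))$. Auxiliary quantities. $u_i$: $u_i^TR_i=u_i^T$, $u_i^T\mathbf 1_{n_i}=n_i$; $v_i$: $C_iv_i=v_i$, $\mathbf 1_{n_i}^Tv_i=n_i$. Constants: $\beta_{\bar x\psi}=\frac2l\max_i\frac{n_i^3\|u_i\|^2}{(u_i^Tv_i)^2}$, $\beta_{\bar x\xi}=\frac2l\max_i\{n_i\sum_{j=1}^{n_i}l_{ij}^2\}$, $b_{0i}=n_i+(\frac1{n_i}+\max_kn_k)\|v_i\|^2\sum_{j=1}^{n_i}l_{ij}^2$, $b_{1i}=\frac{\|u_i\|^2}{n_iu_i^Tv_i}b_{0i}$. Errors and Lyapunov function. $\bm\psi_i=(\psi_{i1}^{i1},\dots,\psi_{i1}^{in_i},\psi_{i2}^{i1},\dots,\psi_{in_i}^{in_i})^T$, $\bar{\bm\psi}_i=\frac1{n_i}(\mathbf 1_{n_i}^T\otimes I_{n_i})\bm\psi_i$,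 $\bm e_{\psi_i}=\bm\psi_i-v_i\otimes\bar{\bm\psi}_i$. $\bar x_i=u_i^T\bm x_i/n_i$, $e_{\bar x_i}=\bar x_i-y_i^*$, $\bar{\bm X}=(\bar x_1\mathbf 1_{n_1}^T,\dots,\bar x_N\mathbf 1_{n_N}^T)^T$. $\bm\xi_i=(\bm\xi_{i1}^T,\dots,\bm\xi_{in_i}^T)^T$, $\bm e_{\xi_i}=\bm\xi_i-\mathbf 1_{n_i}\otimes\bar{\bm X}$. $\bm e_\psi,\bm e_{\bar x},\bm e_\xi$: stacks over $i$. $V_{\bar x}(k)=\sum_{i=1}^N\frac{n_i^3}{\alpha u_i^Tv_i}e_{\bar x_i}(k)^2$. *)

From HB Require Import structures.
From mathcomp Require Import all_boot all_order all_algebra.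
From mathcomp Require Import boolp classical_sets reals topology normedtype derive.
Set Implicit Arguments. Unset Strict Implicit. Unset Printing Implicit Defensive.
Import Order.TTheory GRing.Theory Num.Theory.
Local Open Scope ring_scope.

Notation agent N n := {i : 'I_N & 'I_(n i)}.

Definition ag (N : nat) (n : 'I_N -> nat) (i : 'I_N) (j : 'I_(n i)) : agent N n :=
  existT (fun i => 'I_(n i)) i j.
Arguments ag {N n} i j.

Section Defs.
Context {R : realType}.

Definition pline (T : eqType) (F : (T -> R) -> R) (p : T) (x : T -> R) : R^o -> R^o :=
  fun h => F (fun q => x q + (if q == p then h else 0)).
Definition partial (T : eqType) (F : (T -> R) -> R) (p : T) (x : T -> R) : R :=
  derive1 (pline F p x) 0.
Definition has_partial (T : eqType) (F : (T -> R) -> R) (p : T) (x : T -> R) : Prop :=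
  derivable (pline F p x) 0 1.

Definition sqnorm (T : finType) (x : T -> R) : R := \sum_(p : T) x p ^+ 2.

Definition fcontinuous (T : finType) (G : (T -> R) -> R) : Prop :=
  forall x (e : R), 0 < e -> exists2 d : R, 0 < d &
    forall y, sqnorm (fun p => y p - x p) < d ^+ 2 -> `|G y - G x| < e.

Definition C2 (T : finType) (F : (T -> R) -> R) : Prop :=
  [/\ fcontinuous F,
      forall p x, has_partial F p x,
      forall p, fcontinuous (partial F p),
      forall p q x, has_partial (partial F p) q x &
      forall p q, fcontinuous (partial (partial F p) q)].

Definition convex_fun (T : finType) (F : (T -> R) -> R) : Prop :=
  forall (a b : T -> R) (t : R), 0 <= t <= 1 ->
    F (fun p => t * a p + (1 - t) * b p) <= t * F a + (1 - t) * F b.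

Definition grad_lipschitz (T : finType) (F : (T -> R) -> R) (L : R) : Prop :=
  forall a b : T -> R,
    Num.sqrt (sqnorm (fun p => partial F p a - partial F p b))
      <= L * Num.sqrt (sqnorm (fun p => a p - b p)).

Variables (N : nat) (n : 'I_N -> nat).

(* g_i(y) = f_i(y_1 1^T, ..., y_N 1^T), f_i = sum_j f_ij *)
Definition gcost (f : agent N n -> (agent N n -> R) -> R) (i : 'I_N) (y : 'I_N -> R) : R :=
  \sum_(j < n i) f (ag i j) (fun a => y (tag a)).

Definition Qmap (f : agent N n -> (agent N n -> R) -> R) (y : 'I_N -> R) (i : 'I_N) : R :=
  partial (gcost f i) i y.

Definition nash_eq (f : agent N n -> (agent N n -> R) -> R) (ys : 'I_N -> R) : Prop :=
  forall (i : 'I_N) (z : R),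
    gcost f i ys <= gcost f i (fun k => if k == i then z else ys k).

Definition strongly_connected (T : finType) (e : rel T) : Prop :=
  forall a b : T, connect e a b.

(* a_{ij}^{pq}: E p a means "a receives from p". *)
Definition adj (E : rel (agent N n)) (a p : agent N n) : R :=
  ((E p a) && (p != a))%:R.
Definition indeg (E : rel (agent N n)) (a : agent N n) : R := \sum_p adj E a p.

(* Trajectory of the algorithm. x k a = x_a(k); xi k a p = xi_a^p(k);
   psi k (ij) l = psi_{ij}^{il}(k). *)
Definition trajectory (E : rel (agent N n)) (f : agent N n -> (agent N n -> R) -> R)
  (Rm Cm : forall i : 'I_N, 'M[R]_(n i)) (alpha : R)
  (x : nat -> agent N n -> R) (xi : nat -> agent N n -> agent N n -> R)
  (psi : nat -> forall a : agent N n, 'I_(n (tag a)) -> R) : Prop :=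
  [/\ (forall a l, psi 0%N a l = partial (f a) (ag (tag a) l) (xi 0%N a)),
      (forall k a, x k.+1 a =
         \sum_(m < n (tag a)) Rm (tag a) (tagged a) m * x k (ag (tag a) m)
         - alpha / (n (tag a))%:R * \sum_(m < n (tag a)) psi k a m),
      (forall k a p, xi k.+1 a p =
         xi k a p - (indeg E a + adj E a p)^-1 *
           (\sum_(b : agent N n) adj E a b * (xi k a p - xi k b p)
            + adj E a p * (xi k a p - x k p))) &
      (forall k a l, psi k.+1 a l =
         \sum_(m < n (tag a)) Cm (tag a) (tagged a) m * psi k (ag (tag a) m) l
         + partial (f a) (ag (tag a) l) (xi k.+1 a)
         - partial (f a) (ag (tag a) l) (xi k a))].

Definition xbar (u : forall i : 'I_N, 'rV[R]_(n i)) (x : agent N n -> R) (i : 'I_N) : R :=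
  (\sum_(j < n i) u i 0 j * x (ag i j)) / (n i)%:R.

Definition e_xbar_sq (u : forall i : 'I_N, 'rV[R]_(n i)) (ys : 'I_N -> R)
  (x : agent N n -> R) : R :=
  \sum_(i < N) (xbar u x i - ys i) ^+ 2.

Definition e_xi_sq (u : forall i : 'I_N, 'rV[R]_(n i)) (x : agent N n -> R)
  (xi : agent N n -> agent N n -> R) : R :=
  \sum_(a : agent N n) \sum_(p : agent N n) (xi a p - xbar u x (tag p)) ^+ 2.

Definition psibar (psi : forall a : agent N n, 'I_(n (tag a)) -> R) (i : 'I_N) (l : 'I_(n i)) : R :=
  (n i)%:R^-1 * \sum_(j < n i) psi (ag i j) l.

Definition e_psi_sq (v : forall i : 'I_N, 'cV[R]_(n i))
  (psi : forall a : agent N n, 'I_(n (tag a)) -> R) : R :=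
  \sum_(i < N) \sum_(j < n i) \sum_(l < n i)
     (psi (ag i j) l - v i j 0 * psibar psi l) ^+ 2.

Definition uv (u : forall i : 'I_N, 'rV[R]_(n i)) (v : forall i : 'I_N, 'cV[R]_(n i))
  (i : 'I_N) : R := (u i *m v i) 0 0.

Definition Vxbar (u : forall i : 'I_N, 'rV[R]_(n i)) (v : forall i : 'I_N, 'cV[R]_(n i))
  (alpha : R) (ys : 'I_N -> R) (x : agent N n -> R) : R :=
  \sum_(i < N) ((n i)%:R ^+ 3 / (alpha * uv u v i)) * (xbar u x i - ys i) ^+ 2.

Definition rnorm_sq m (w : 'rV[R]_m) : R := \sum_(j < m) w 0 j ^+ 2.
Definition cnorm_sq m (w : 'cV[R]_m) : R := \sum_(j < m) w j 0 ^+ 2.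
Definition sumlip2 (lip : agent N n -> R) (i : 'I_N) : R :=
  \sum_(j < n i) lip (ag i j) ^+ 2.

Definition beta_xpsi (l : R) (u : forall i : 'I_N, 'rV[R]_(n i))
  (v : forall i : 'I_N, 'cV[R]_(n i)) : R :=
  2 / l * \big[Num.max/0]_(i < N)
     ((n i)%:R ^+ 3 * rnorm_sq (u i) / (uv u v i) ^+ 2).

Definition beta_xxi (l : R) (lip : agent N n -> R) : R :=
  2 / l * \big[Num.max/0]_(i < N) ((n i)%:R * sumlip2 lip i).

Definition b0 (v : forall i : 'I_N, 'cV[R]_(n i)) (lip : agent N n -> R) (i : 'I_N) : R :=
  (n i)%:R + ((n i)%:R^-1 + (\max_(k < N) n k)%:R) * cnorm_sq (v i) * sumlip2 lip i.

Definition b1 (u : forall i : 'I_N, 'rV[R]_(n i)) (v : forall i : 'I_N, 'cV[R]_(n i))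
  (lip : agent N n -> R) (i : 'I_N) : R :=
  rnorm_sq (u i) / ((n i)%:R * uv u v i) * b0 v lip i.

End Defs.

(* The u_i-weighted average xbar_i of coalition i moves by xbar_i(k+1) = xbar_i(k) - α/n_i² S_i,
   S_i = Σ_j u_ij Σ_m ψ_ij^im.  Since C_i is column stochastic, ψ tracks gradients exactly in
   sum: Σ_j ψ_ij^im = Σ_j ∂f_ij/∂x_im(ξ_ij), so S_i is a ψ-consensus error plus (u_iᵀv_i / n_i) G_i
   with G_i = Σ_j Σ_m ∂f_ij/∂x_im(ξ_ij).  In the expanded square of the update, the cross term
   -2 e_i G_i is -2 e_i Q_i(xbar) up to a Lipschitz error driven by the ξ-consensus error, and
   (A3) together with Q(y^⋆) = 0 (first-order optimality at the Nash equilibrium, computed from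
   the continuous partial derivatives of the f_ij) bounds Σ_i -2 e_i Q_i(xbar) by -2 l ‖e‖².
   Young's inequality absorbs the remaining cross terms and Cauchy-Schwarz bounds α S_i²; the
   weights n_i³ / (α u_iᵀv_i) are positive by Perron-Frobenius for the strongly connected G_i. *)

From HB Require Import structures.
From mathcomp Require Import all_boot all_order all_algebra.
From mathcomp Require Import boolp classical_sets reals topology normedtype derive.
From mathcomp Require Import ring lra.

Import Order.TTheory GRing.Theory Num.Theory numFieldNormedType.Exports.
Local Open Scope classical_set_scope.
Local Open Scope ring_scope.

Lemma ler_sqr_of_norm (R : realDomainType) (a b : R) : `|a| <= b -> a ^+ 2 <= b ^+ 2.
Proof.
by move=> ab; rewrite -real_normK ?num_real // lerXn2r ?nnegrE ?(le_trans _ ab).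
Qed.

Section SquareInequalities.
Context {R : rcfType}.

Lemma cauchy_schwarz {I : finType} (a b : I -> R) :
  (\sum_i a i * b i) ^+ 2 <= (\sum_i a i ^+ 2) * (\sum_i b i ^+ 2).
Proof.
set A := \sum_i a i ^+ 2; set B := \sum_i b i ^+ 2; set C := \sum_i a i * b i.
have A0 : 0 <= A by apply: sumr_ge0 => i _; apply: sqr_ge0.
have [B0|Bn0] := eqVneq B 0.
  have b0 i : b i = 0.
    apply/eqP; rewrite -sqrf_eq0; apply/eqP.
    move/eqP: B0; rewrite psumr_eq0 => [/allP/(_ i (mem_index_enum _))/eqP //|j _].
    exact: sqr_ge0.
  by rewrite /C big1 ?expr0n ?B0 ?mulr0 // => i _; rewrite b0 mulr0.
have B0 : 0 < B by rewrite lt_def Bn0 sumr_ge0 // => i _; apply: sqr_ge0.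
have : 0 <= \sum_i (a i - C / B * b i) ^+ 2 by apply: sumr_ge0 => i _; apply: sqr_ge0.
have -> : \sum_i (a i - C / B * b i) ^+ 2 = A - C ^+ 2 / B.
  rewrite (eq_bigr (fun i => a i ^+ 2 - 2 * (C / B) * (a i * b i) + (C / B) ^+ 2 * b i ^+ 2));
    last by move=> i _; ring.
  rewrite big_split sumrB /= -!mulr_sumr -/A -/B -/C; field; exact: Bn0.
by rewrite subr_ge0 ler_pdivrMr // mulrC.
Qed.

Lemma sqr_sum_le_mul {I : finType} {D a b : I -> R} :
  (forall j, 0 <= a j) -> (forall j, 0 <= b j) -> (forall j, D j ^+ 2 <= a j * b j) ->
  (\sum_j D j) ^+ 2 <= (\sum_j a j) * (\sum_j b j).
Proof.
move=> a0 b0 Dab.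
have D_le j : `|D j| <= Num.sqrt (a j) * Num.sqrt (b j).
  by rewrite -sqrtr_sqr -sqrtrM // ler_sqrt ?mulr_ge0.
apply: le_trans (_ : (\sum_j Num.sqrt (a j) * Num.sqrt (b j)) ^+ 2 <= _).
  apply: ler_sqr_of_norm; apply: le_trans (ler_norm_sum _ _ _) _.
  exact: ler_sum.
apply: le_trans (cauchy_schwarz _ _) _.
by rewrite (eq_bigr _ (fun j _ => sqr_sqrtr (a0 j))) (eq_bigr _ (fun j _ => sqr_sqrtr (b0 j))).
Qed.

Lemma sqr_sum_le_card {m} (d : 'I_m -> R) : (\sum_(j < m) d j) ^+ 2 <= m%:R * \sum_(j < m) d j ^+ 2.
Proof.
have := @sqr_sum_le_mul _ d (fun=> 1) (fun j => d j ^+ 2).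
by rewrite sumr_const card_ord; apply => // j; rewrite ?ler01 ?sqr_ge0 ?mul1r.
Qed.

Lemma sqrD_le_mulD (a b P Q X Y : R) : 0 <= P -> 0 <= Q -> 0 <= X -> 0 <= Y ->
  a ^+ 2 <= P * X -> b ^+ 2 <= Q * Y -> (a + b) ^+ 2 <= (P + Q) * (X + Y).
Proof.
move=> P0 Q0 X0 Y0 aPX bQY.
have := @sqr_sum_le_mul _ (fun t : bool => if t then a else b) (fun t => if t then P else Q)
  (fun t => if t then X else Y).
by rewrite !big_bool; apply; case.
Qed.

Lemma young_ineq {l : R} (e d : R) : 0 < l -> - 2 * e * d <= l / 2 * e ^+ 2 + 2 / l * d ^+ 2.
Proof.
move=> l0; have : 0 <= (l / 2 * e + d) ^+ 2 by apply: sqr_ge0.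
have -> : (l / 2 * e + d) ^+ 2 = l / 2 * (l / 2 * e ^+ 2 + 2 / l * d ^+ 2 + 2 * e * d).
  by field; rewrite gt_eqF.
by rewrite pmulr_rge0 ?divr_gt0 //; lra.
Qed.

Lemma sqrD_le_split (a b s : R) : 0 < s ->
  (a + b) ^+ 2 <= (1 + s) * a ^+ 2 + (1 + s^-1) * b ^+ 2.
Proof.
move=> s0; have : 0 <= (s * a - b) ^+ 2 / s by rewrite divr_ge0 ?sqr_ge0 // ltW.
have -> : (s * a - b) ^+ 2 / s = (1 + s) * a ^+ 2 + (1 + s^-1) * b ^+ 2 - (a + b) ^+ 2.
  by field; rewrite gt_eqF.
by rewrite subr_ge0.
Qed.

End SquareInequalities.

Section StochasticEigenvector.
Context {R : realFieldType} {T : finType}.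
Variables (A : T -> T -> R) (r : rel T).
Hypotheses (A_ge0 : forall j k, 0 <= A j k) (A_pos : forall j k, r j k -> 0 < A j k)
           (r_connected : forall j k, connect r j k).

Lemma connect_propagate (P : pred T) :
  (forall j k, r j k -> P j -> P k) -> forall j k, connect r j k -> P j -> P k.
Proof.
move=> rP j k /connectP[s rs ->]; elim: s j rs => //= l s IH j /andP[rjl rs] Pj.
exact: IH rs (rP _ _ rjl Pj).
Qed.

Lemma invariant_nonneg_gt0 {g : T -> R} : (forall j, 0 <= g j) ->
  (forall k, g k = \sum_j g j * A j k) -> (exists j, 0 < g j) -> forall k, 0 < g k.
Proof.
move=> g0 gA [j gj] k; apply: (connect_propagate (fun j => 0 < g j)) (r_connected j k) gj.
move=> {}j {}k rjk /= gj; rewrite gA (bigD1 j) //=.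
by rewrite ltr_pwDl ?mulr_gt0 ?A_pos // sumr_ge0 // => l _; rewrite mulr_ge0.
Qed.

(* |w| is subinvariant with the same mass as w, hence invariant; then |w| - w is a nonnegative
   invariant vector, which irreducibility forces to be 0 or everywhere positive. *)
Lemma stochastic_left_eigvec_gt0 (w : T -> R) : (forall j, \sum_k A j k = 1) ->
  (forall k, w k = \sum_j w j * A j k) -> 0 < \sum_j w j -> forall k, 0 < w k.
Proof.
move=> A1 wA w_sum.
have absw_sub k : `|w k| <= \sum_j `|w j| * A j k.
  rewrite {1}wA; apply: le_trans (ler_norm_sum _ _ _) _.
  by apply: ler_sum => j _; rewrite normrM (ger0_norm (A_ge0 j k)).
have absw_inv k : `|w k| = \sum_j `|w j| * A j k.
  have total : \sum_k (\sum_j `|w j| * A j k - `|w k|) = 0.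
    rewrite sumrB exchange_big /= (eq_bigr (fun j => `|w j|)) ?subrr // => j _.
    by rewrite -mulr_sumr A1 mulr1.
  apply/eqP; rewrite eq_sym -subr_eq0; apply/eqP; move/eqP: total.
  rewrite psumr_eq0 => [/allP/(_ k (mem_index_enum _))/eqP //|j _].
  by rewrite subr_ge0 absw_sub.
have w_nonneg k : 0 <= w k.
  have neg_part_inv j : `|w j| - w j = \sum_l (`|w l| - w l) * A l j.
    by rewrite absw_inv [w j]wA -sumrB; apply: eq_bigr => l _; rewrite mulrBl.
  have neg_part_ge0 j : 0 <= `|w j| - w j by rewrite subr_ge0 ler_norm.
  rewrite leNgt; apply/negP => wk_lt0.
  have wk_pos : 0 < `|w k| - w k by rewrite ltr0_norm //; lra.
  have w_lt0 j : w j < 0.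
    have := invariant_nonneg_gt0 neg_part_ge0 neg_part_inv (ex_intro _ k wk_pos) j.
    by rewrite subr_gt0; case: (ltP (w j) 0) => // wj; rewrite ger0_norm // ltxx.
  by move: w_sum; rewrite ltNge sumr_le0 // => j _; rewrite ltW.
apply: invariant_nonneg_gt0 w_nonneg wA _; apply/not_existsP => none.
move: w_sum; rewrite ltNge sumr_le0 // => j _.
by rewrite leNgt; apply/negP/none.
Qed.

End StochasticEigenvector.

Section DerivativeAtZero.
Context {R : realType}.

Definition has_deriv0 (phi : R -> R) (D : R) : Prop :=
  forall e : R, 0 < e -> exists2 d : R, 0 < d &
    forall h, `|h| < d -> `|phi h - phi 0 - h * D| <= e * `|h|.

Lemma has_deriv0_is_derive (phi : R^o -> R^o) (D : R) :
  has_deriv0 phi D -> is_derive (0 : R^o) (1 : R^o) phi D.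
Proof.
move=> dphi.
have lim_quot : (fun h : R^o => h^-1 *: ((phi \o shift 0) (h *: (1 : R^o)) - phi 0))
    @ (0 : R^o)^' --> (D : R^o).
  apply/cvgrPdist_le => e e0; have [d d0 Hd] := dphi e e0.
  exists d => //= h; rewrite /ball_ /= sub0r normrN => hd h0.
  rewrite addr0 /GRing.scale /= mulr1.
  have -> : D - h^-1 * (phi h - phi 0) = h^-1 * (h * D - (phi h - phi 0)) by field.
  rewrite normrM normfV ler_pdivrMl ?normr_gt0 // distrC (mulrC `|h|).
  exact: Hd.
by apply: DeriveDef; [apply/cvg_ex; exists D | apply: cvg_lim].
Qed.

Lemma has_deriv0D (phi psi : R -> R) (D E : R) :
  has_deriv0 phi D -> has_deriv0 psi E -> has_deriv0 (fun h => phi h + psi h) (D + E).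
Proof.
move=> dphi dpsi e e0; have e2 : 0 < e / 2 by rewrite divr_gt0.
have [d1 d1p H1] := dphi _ e2; have [d2 d2p H2] := dpsi _ e2.
exists (Num.min d1 d2) => [|h]; first by rewrite lt_min d1p.
rewrite lt_min => /andP[/H1 + /H2].
have -> : phi h + psi h - (phi 0 + psi 0) - h * (D + E) =
  (phi h - phi 0 - h * D) + (psi h - psi 0 - h * E) by ring.
move=> h1 h2; apply: le_trans (ler_normD _ _) _; lra.
Qed.

Lemma has_deriv0_sum (I : Type) (s : seq I) (phi : I -> R -> R) (D : I -> R) :
  (forall j, has_deriv0 (phi j) (D j)) ->
  has_deriv0 (fun h => \sum_(j <- s) phi j h) (\sum_(j <- s) D j).
Proof.
move=> dphi; elim: s => [|j s IH].
  move=> e e0; exists 1 => // h _.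
  by rewrite !big_nil mulr0 !subrr normr0 mulr_ge0 // ltW.
have -> : (fun h => \sum_(k <- j :: s) phi k h) = (fun h => phi j h + \sum_(k <- s) phi k h).
  by apply: funext => h; rewrite big_cons.
by rewrite big_cons; apply: has_deriv0D.
Qed.

Lemma has_deriv0_min (phi : R -> R) (D : R) :
  has_deriv0 phi D -> (forall h, phi 0 <= phi h) -> D = 0.
Proof.
move=> dphi phi_min; apply/eqP; apply: contraT => D0.
have [d d0 Hd] : exists2 d, 0 < d & forall h, `|h| < d ->
    `|phi h - phi 0 - h * D| <= `|D| / 2 * `|h|.
  by apply: dphi; rewrite divr_gt0 ?normr_gt0.
have d20 : 0 < d / 2 by rewrite divr_gt0.
have /Hd hr : `|d / 2| < d by rewrite gtr0_norm //; lra.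
have /Hd hl : `|- (d / 2)| < d by rewrite normrN gtr0_norm //; lra.
move: hr hl (phi_min (d / 2)) (phi_min (- (d / 2))).
rewrite normrN (gtr0_norm d20) !ler_norml => /andP[r1 r2] /andP[l1 l2] m1 m2.
have [Dn|Dp] : D < 0 \/ 0 < D by move: D0; rewrite neq_lt => /orP.
  by rewrite ltr0_norm // in r1 r2 l1 l2; nra.
by rewrite gtr0_norm // in r1 r2 l1 l2; nra.
Qed.

End DerivativeAtZero.

Section PartialDerivatives.
Context {R : realType} {T : finType}.
Implicit Types (F : (T -> R) -> R) (p : T) (x y z : T -> R).

Lemma sqnorm_ge0 x : 0 <= sqnorm x.
Proof. by apply: sumr_ge0 => p _; apply: sqr_ge0. Qed.

Definition upd z p (c : R) : T -> R := fun q => z q + (if q == p then c else 0).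

Lemma pline_upd F p z c : pline F p (upd z p c) = (fun h => pline F p z (h + c)).
Proof.
apply: funext => h; rewrite /pline /upd; congr F; apply: funext => q.
by case: (q == p); rewrite ?addr0 // [h + c]addrC addrA.
Qed.

Lemma pline0 F p z : pline F p z 0 = F z.
Proof. by rewrite /pline; congr F; apply: funext => q; rewrite if_same addr0. Qed.

Lemma pline_is_derive {F p} z (t : R) : (forall y, has_partial F p y) ->
  is_derive t 1 (pline F p z : R^o -> R^o) (partial F p (upd z p t)).
Proof.
move=> hp; have := hp (upd z p t).
rewrite /has_partial /partial derive1E pline_upd /derivable /derive.
have -> : (fun h : R^o => h^-1 *: (((fun h0 : R^o => pline F p z (h0 + t)) \o shift 0) h%:A
                                  - pline F p z (0 + t)))
  = (fun h : R^o => h^-1 *: ((pline F p z \o shift t) h%:A - pline F p z t)).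
  by apply: funext => h; rewrite /= addr0 add0r.
by move=> ex; apply: DeriveDef.
Qed.

Lemma partial_mvt {F p} z (h : R) : (forall y, has_partial F p y) ->
  exists2 c : R, `|c| <= `|h| & F (upd z p h) - F z = h * partial F p (upd z p c).
Proof.
move=> hp; have dF t := pline_is_derive z t hp.
have cF a b : {within `[a, b], continuous (pline F p z)}.
  by apply: derivable_within_continuous => t _; have [] := dF t.
rewrite -[F z](pline0 F p z); change (F (upd z p h)) with (pline F p z h).
have [hn|hp'|->] := ltgtP h 0.
- have [c] := MVT hn (fun t _ => dF t) (cF h 0); rewrite in_itv /= => /andP[c1 c2] Hc.
  exists c; last by lra.
  by rewrite (ltr0_norm hn) ltr0_norm; lra.
- have [c] := MVT hp' (fun t _ => dF t) (cF 0 h); rewrite in_itv /= => /andP[c1 c2] Hc.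
  exists c; last by lra.
  by rewrite (gtr0_norm hp') gtr0_norm; lra.
- by exists 0; rewrite ?normr0 // mul0r subrr.
Qed.

Lemma partial_has_deriv0 F p x (D : R) : has_deriv0 (pline F p x) D -> partial F p x = D.
Proof.
by move/has_deriv0_is_derive => dF; rewrite /partial derive1E; apply: derive_val.
Qed.

Lemma shift0 x (d : T -> R) : (fun q => x q + 0 * d q) = x.
Proof. by apply: funext => q; rewrite mul0r addr0. Qed.

Definition dir_on (s : seq T) (d : T -> R) : T -> R := fun q => if q \in s then d q else 0.

Lemma sqnorm_upd_dir_on {x d s p} {h c : R} : p \notin s -> `|c| <= `|h * d p| ->
  sqnorm (fun q => upd (fun q => x q + h * dir_on s d q) p c q - x q) <= h ^+ 2 * sqnorm d.
Proof.
move=> ps c_le; rewrite /sqnorm mulr_sumr; apply: ler_sum => q _.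
rewrite /upd /= (_ : x q + _ + _ - x q = h * dir_on s d q + (if q == p then c else 0));
  last by ring.
rewrite /dir_on -exprMn; have [->|_] := eqVneq q p.
  rewrite (negPf ps) mulr0 add0r -(real_normK (num_real (h * d p))).
  exact: ler_sqr_of_norm.
by rewrite addr0; case: ifP; rewrite ?mulr0 ?expr0n ?sqr_ge0.
Qed.

Lemma has_deriv0_dir_cons F x d p s :
  (forall y, has_partial F p y) -> fcontinuous (partial F p) -> p \notin s ->
  has_deriv0 (fun h => F (fun q => x q + h * dir_on s d q)) (\sum_(j <- s) d j * partial F j x) ->
  has_deriv0 (fun h => F (fun q => x q + h * dir_on (p :: s) d q))
             (\sum_(j <- p :: s) d j * partial F j x).
Proof.
move=> hp hc ps dir_s e e0; have e2 : 0 < e / 2 by rewrite divr_gt0.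
set dp := `|d p| + 1; have dp0 : 0 < dp by rewrite ltr_pwDr.
have [d1 d1p H1] := dir_s _ e2.
have [|d2 d2p H2] := hc x (e / (2 * dp)); first by rewrite divr_gt0 ?mulr_gt0.
set K := sqnorm d; have K0 : 0 <= K := sqnorm_ge0 d.
exists (Num.min d1 (d2 / (K + 1))) => [|h]; first by rewrite lt_min d1p divr_gt0 //; lra.
rewrite lt_min ltr_pdivlMr ?ltr_pwDr // => /andP[/H1 + hd2]; rewrite /= !shift0.
set z := fun q => x q + h * dir_on s d q => Hz.
have -> : (fun q => x q + h * dir_on (p :: s) d q) = upd z p (h * d p).
  apply: funext => q; rewrite /upd /z /dir_on inE.
  by have [->|_] := eqVneq q p; rewrite /= ?(negPf ps) ?addr0 // mulr0 addr0.
have [c c_le Hc] := partial_mvt z (h * d p) hp.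
have /H2 grad_close : sqnorm (fun q => upd z p c q - x q) < d2 ^+ 2.
  apply: le_lt_trans (sqnorm_upd_dir_on ps c_le) _.
  have h0 := normr_ge0 h; rewrite -real_normK ?num_real //.
  apply: le_lt_trans (_ : (`|h| * (K + 1)) ^+ 2 < _); last by rewrite ltr_sqr ?nnegrE; nra.
  by rewrite exprMn ler_wpM2l ?sqr_ge0 // -/K; nra.
have -> : F (upd z p (h * d p)) - F x - h * \sum_(j <- p :: s) d j * partial F j x
  = h * d p * (partial F p (upd z p c) - partial F p x)
    + (F z - F x - h * \sum_(j <- s) d j * partial F j x).
  by rewrite big_cons mulrBr -Hc; ring.
apply: le_trans (ler_normD _ _) _; rewrite !normrM -mulrA.
suff : `|d p| * `|partial F p (upd z p c) - partial F p x| <= e / 2.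
  by move=> /(ler_wpM2l (normr_ge0 h)); lra.
apply: le_trans (_ : dp * (e / (2 * dp)) <= _).
  by apply: ler_pM; rewrite ?normr_ge0 ?ltW //; rewrite /dp; lra.
rewrite (_ : dp * (e / (2 * dp)) = e / 2) //.
by field; rewrite gt_eqF.
Qed.

Lemma has_deriv0_dir F x (d : T -> R) :
  (forall p y, has_partial F p y) -> (forall p, fcontinuous (partial F p)) ->
  has_deriv0 (fun h => F (fun q => x q + h * d q)) (\sum_p d p * partial F p x).
Proof.
move=> hp hc.
suff dir_s s : uniq s ->
    has_deriv0 (fun h => F (fun q => x q + h * dir_on s d q)) (\sum_(p <- s) d p * partial F p x).
  have := dir_s _ (enum_uniq T); rewrite big_enum /=.
  by congr has_deriv0; apply: funext => h; congr F; apply: funext => q; rewrite /dir_on mem_enum.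
elim: s => [_|p s IH /andP[ps us]]; last exact: has_deriv0_dir_cons (IH us).
move=> e e0; exists 1 => // h _.
have -> : (fun q => x q + h * dir_on [::] d q) = x.
  by apply: funext => q; rewrite /dir_on in_nil mulr0 addr0.
by rewrite /= shift0 big_nil mulr0 !subrr normr0 mulr_ge0 // ltW.
Qed.

Lemma grad_lipschitz_sqr {F} {L : R} y z : grad_lipschitz F L ->
  sqnorm (fun p => partial F p y - partial F p z) <= L ^+ 2 * sqnorm (fun p => y p - z p).
Proof.
move/(_ y z) => lipF.
rewrite -(sqr_sqrtr (sqnorm_ge0 (fun p => partial F p y - partial F p z))).
rewrite -(sqr_sqrtr (sqnorm_ge0 (fun p => y p - z p))) -exprMn.
by apply: ler_sqr_of_norm; rewrite ger0_norm ?sqrtr_ge0.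
Qed.

End PartialDerivatives.

Section CoalitionGradient.
Context {R : realType} {N : nat} {n : 'I_N -> nat}.
Local Notation agt := (agent N n).
Variables (f : agt -> (agt -> R) -> R) (lip : agt -> R).
Hypotheses (f_partial : forall a p y, has_partial (f a) p y)
           (f_partial_cont : forall a p, fcontinuous (partial (f a) p))
           (f_lip : forall a, grad_lipschitz (f a) (lip a)).

Lemma sum_agent (F : agt -> R) : \sum_a F a = \sum_i \sum_(j < n i) F (ag i j).
Proof.
rewrite (sig_big_dep xpredT (fun _ => xpredT) (fun i (j : 'I_(n i)) => F (ag i j))) /=.
by apply: eq_bigr => -[i j].
Qed.

Lemma sum_agent_tag (F : agt -> R) i :
  \sum_(a : agt) (tag a == i)%:R * F a = \sum_(l < n i) F (ag i l).
Proof.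
rewrite sum_agent (bigD1 i) //= [X in _ + X]big1 => [|i' ne]; last first.
  by apply: big1 => j _; rewrite /= (negPf ne) mul0r.
by rewrite addr0; apply: eq_bigr => l _; rewrite /= eqxx mul1r.
Qed.

Lemma sum_block_le (F : agt -> R) i : (forall a, 0 <= F a) ->
  \sum_(l < n i) F (ag i l) <= \sum_a F a.
Proof.
move=> F0; rewrite sum_agent (bigD1 i) //= lerDl.
by apply: sumr_ge0 => i' _; apply: sumr_ge0.
Qed.

Definition grad_block i (Y : 'I_(n i) -> agt -> R) : R :=
  \sum_(j < n i) \sum_(m < n i) partial (f (ag i j)) (ag i m) (Y j).

Lemma gcost_has_deriv0 (y : 'I_N -> R) i :
  has_deriv0 (pline (gcost f i) i y) (grad_block i (fun _ a => y (tag a))).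
Proof.
have -> : pline (gcost f i) i y =
    fun h => \sum_(j < n i) f (ag i j) (fun a => y (tag a) + h * (tag a == i)%:R).
  apply: funext => h; apply: eq_bigr => j _; congr (f _); apply: funext => a /=.
  by case: eqP; rewrite ?mulr1 ?mulr0.
apply: has_deriv0_sum => j.
rewrite -(sum_agent_tag (fun p => partial (f (ag i j)) p (fun a => y (tag a)))).
exact: has_deriv0_dir.
Qed.

Lemma Qmap_grad_block (y : 'I_N -> R) i : Qmap f y i = grad_block i (fun _ a => y (tag a)).
Proof. exact/partial_has_deriv0/gcost_has_deriv0. Qed.

Lemma Qmap_nash (ys : 'I_N -> R) : nash_eq f ys -> forall i, Qmap f ys i = 0.
Proof.
move=> nash i; rewrite Qmap_grad_block; apply: has_deriv0_min (gcost_has_deriv0 ys i) _ => h.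
have -> : pline (gcost f i) i ys h = gcost f i (fun k => if k == i then ys i + h else ys k).
  by congr (gcost f i); apply: funext => k; case: eqP => [->|]; rewrite ?addr0.
by rewrite pline0; apply: nash.
Qed.

Lemma grad_block_lipschitz i (Y : 'I_(n i) -> agt -> R) (Z : agt -> R) :
  (grad_block i Y - grad_block i (fun=> Z)) ^+ 2
    <= sumlip2 lip i * ((n i)%:R * \sum_(j < n i) \sum_a (Y j a - Z a) ^+ 2).
Proof.
rewrite /grad_block -sumrB; under eq_bigr do rewrite -sumrB.
rewrite mulr_sumr; apply: sqr_sum_le_mul => j; first exact: sqr_ge0.
  by rewrite mulr_ge0 ?ler0n // sumr_ge0 // => a _; apply: sqr_ge0.
apply: le_trans (sqr_sum_le_card _) _; rewrite mulrCA ler_wpM2l ?ler0n //.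
apply: le_trans (grad_lipschitz_sqr (Y j) Z (f_lip (ag i j))).
apply: (sum_block_le (fun a => (partial (f (ag i j)) a (Y j) - partial (f (ag i j)) a Z) ^+ 2)).
by move=> a; apply: sqr_ge0.
Qed.

End CoalitionGradient.

Section Algorithm.
Context {R : realType} {N : nat} {n : 'I_N -> nat}.
Local Notation agt := (agent N n).
Variables (E : rel agt) (f : agt -> (agt -> R) -> R) (lip : agt -> R) (l : R)
  (Rm Cm : forall i : 'I_N, 'M[R]_(n i))
  (u : forall i : 'I_N, 'rV[R]_(n i)) (v : forall i : 'I_N, 'cV[R]_(n i))
  (ys : 'I_N -> R) (alpha : R)
  (x : nat -> agt -> R) (xi : nat -> agt -> agt -> R)
  (psi : nat -> forall a : agt, 'I_(n (tag a)) -> R).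
Hypotheses (n_gt0 : forall i, (0 < n i)%N)
  (E_conn : forall i, strongly_connected [rel j m : 'I_(n i) | E (ag i j) (ag i m)])
  (Rm_pattern : forall i (j m : 'I_(n i)),
     if (m == j) || E (ag i m) (ag i j) then 0 < Rm i j m else Rm i j m == 0)
  (Rm_row1 : forall i (j : 'I_(n i)), \sum_(m < n i) Rm i j m = 1)
  (Cm_pattern : forall i (j m : 'I_(n i)),
     if (m == j) || E (ag i j) (ag i m) then 0 < Cm i m j else Cm i m j == 0)
  (Cm_col1 : forall i (j : 'I_(n i)), \sum_(m < n i) Cm i m j = 1)
  (u_eig : forall i, u i *m Rm i = u i /\ \sum_(j < n i) u i 0 j = (n i)%:R)
  (v_eig : forall i, Cm i *m v i = v i /\ \sum_(j < n i) v i j 0 = (n i)%:R)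
  (traj : trajectory E f Rm Cm alpha x xi psi)
  (f_partial : forall a p y, has_partial (f a) p y)
  (f_partial_cont : forall a p, fcontinuous (partial (f a) p))
  (f_lip : forall a, grad_lipschitz (f a) (lip a))
  (nash : nash_eq f ys) (l_gt0 : 0 < l) (alpha_gt0 : 0 < alpha)
  (Q_strong_mono : forall a b : 'I_N -> R,
     l * \sum_(i < N) (a i - b i) ^+ 2 <= \sum_(i < N) (a i - b i) * (Qmap f a i - Qmap f b i)).

Lemma u_gt0 i j : 0 < u i 0 j.
Proof.
apply: (@stochastic_left_eigvec_gt0 _ _ (Rm i) [rel j m | E (ag i m) (ag i j)]) => //.
- by move=> j' m; have := Rm_pattern i j' m; case: ifP => _; [move/ltW | move/eqP ->].
- by move=> j' m /= e; have := Rm_pattern i j' m; rewrite e orbT.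
- move=> j' m; rewrite (connect_rev [rel j m : 'I_(n i) | E (ag i j) (ag i m)]).
  exact: E_conn.
- by move=> m; have /matrixP/(_ 0 m) := (u_eig i).1; rewrite mxE => <-.
- by rewrite (u_eig i).2 ltr0n.
Qed.

Lemma v_gt0 i j : 0 < v i j 0.
Proof.
apply: (@stochastic_left_eigvec_gt0 _ _ (fun m j => Cm i j m)
          [rel j m | E (ag i j) (ag i m)] _ _ _ (fun j => v i j 0)) => //.
- by move=> j' m; have := Cm_pattern i j' m; case: ifP => _; [move/ltW | move/eqP ->].
- by move=> j' m /= e; have := Cm_pattern i j' m; rewrite e orbT.
- exact: E_conn.
- move=> m; have /matrixP/(_ m 0) := (v_eig i).1; rewrite mxE => <-.
  by apply: eq_bigr => j' _; rewrite mulrC.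
- by rewrite (v_eig i).2 ltr0n.
Qed.

Lemma uv_gt0 i : 0 < uv u v i.
Proof.
rewrite /uv mxE; move: (n_gt0 i) (@u_gt0 i) (@v_gt0 i).
case: (n i) (u i) (v i) => // m ui vi _ up vp.
rewrite big_ord_recl ltr_pwDl ?mulr_gt0 // sumr_ge0 // => j _.
by rewrite mulr_ge0 // ltW.
Qed.

Lemma psi_tracking k i (m : 'I_(n i)) :
  \sum_(j < n i) psi k (ag i j) m = \sum_(j < n i) partial (f (ag i j)) (ag i m) (xi k (ag i j)).
Proof.
have [psi0 _ _ psiS] := traj; elim: k => [|k IH]; first by apply: eq_bigr => j _; rewrite psi0.
rewrite (eq_bigr _ (fun j _ => psiS k (ag i j) m)) sumrB big_split /= exchange_big /=.
rewrite (eq_bigr (fun j => psi k (ag i j) m)) => [|j _]; last by rewrite -mulr_suml Cm_col1 mul1r.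
by rewrite IH addrC addrK.
Qed.

Definition utrack k i := \sum_(j < n i) u i 0 j * \sum_(m < n i) psi k (ag i j) m.

Lemma xbar_step k i :
  xbar u (x k.+1) i = xbar u (x k) i - alpha / (n i)%:R ^+ 2 * utrack k i.
Proof.
have [_ xS _ _] := traj; have n0 : (n i)%:R != 0 :> R by rewrite pnatr_eq0 -lt0n.
have u_avg : \sum_(j < n i) u i 0 j * (\sum_(m < n i) Rm i j m * x k (ag i m))
    = \sum_(m < n i) u i 0 m * x k (ag i m).
  under eq_bigr do rewrite mulr_sumr.
  rewrite exchange_big /=; apply: eq_bigr => m _.
  under eq_bigr do rewrite mulrA; rewrite -mulr_suml.
  by have /matrixP/(_ 0 m) := (u_eig i).1; rewrite mxE => ->.
rewrite /xbar /utrack (eq_bigr _ (fun j _ => congr1 (fun t => u i 0 j * t) (xS k (ag i j)))) /=.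
under eq_bigr do rewrite mulrBr.
rewrite sumrB u_avg; under [X in _ - X]eq_bigr do rewrite mulrCA.
by rewrite -mulr_sumr; field.
Qed.

Definition psibar_sum k i := \sum_(m < n i) psibar (psi k) m.

Definition utrack_dev k i :=
  \sum_(j < n i) u i 0 j * \sum_(m < n i) (psi k (ag i j) m - v i j 0 * psibar (psi k) m).

Definition e_psi_blk k i :=
  \sum_(j < n i) \sum_(m < n i) (psi k (ag i j) m - v i j 0 * psibar (psi k) m) ^+ 2.

Definition e_xi_blk k i :=
  \sum_(j < n i) \sum_(a : agt) (xi k (ag i j) a - xbar u (x k) (tag a)) ^+ 2.

Lemma e_psi_blk_ge0 k i : 0 <= e_psi_blk k i.
Proof. by apply: sumr_ge0 => j _; apply: sumr_ge0 => m _; apply: sqr_ge0. Qed.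

Lemma e_xi_blk_ge0 k i : 0 <= e_xi_blk k i.
Proof. by apply: sumr_ge0 => j _; apply: sumr_ge0 => a _; apply: sqr_ge0. Qed.

Lemma e_xbar_sq_ge0 k : 0 <= e_xbar_sq u ys (x k).
Proof. by apply: sumr_ge0 => i _; apply: sqr_ge0. Qed.

Lemma utrack_split k i : utrack k i = utrack_dev k i + uv u v i * psibar_sum k i.
Proof.
rewrite /utrack_dev /uv mxE.
rewrite (eq_bigr (fun j => u i 0 j * \sum_(m < n i) psi k (ag i j) m
   - u i 0 j * v i j 0 * psibar_sum k i)) => [|j _]; last first.
  by rewrite sumrB -mulr_sumr /psibar_sum; ring.
by rewrite sumrB -mulr_suml subrK.
Qed.

Lemma psibar_sum_grad k i :
  (n i)%:R * psibar_sum k i = grad_block f i (fun j => xi k (ag i j)).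
Proof.
have n0 : (n i)%:R != 0 :> R by rewrite pnatr_eq0 -lt0n.
rewrite /psibar_sum /psibar -mulr_sumr mulVKf // /grad_block [RHS]exchange_big /=.
by apply: eq_bigr => m _; apply: psi_tracking.
Qed.

Lemma utrack_dev_bound k i :
  utrack_dev k i ^+ 2 <= rnorm_sq (u i) * ((n i)%:R * e_psi_blk k i).
Proof.
rewrite /utrack_dev /e_psi_blk mulr_sumr; apply: sqr_sum_le_mul => j; first exact: sqr_ge0.
  by rewrite mulr_ge0 ?ler0n // sumr_ge0 // => m _; apply: sqr_ge0.
by rewrite exprMn ler_wpM2l ?sqr_ge0 // sqr_sum_le_card.
Qed.

Lemma grad_track_err k i :
  (grad_block f i (fun j => xi k (ag i j)) - Qmap f (xbar u (x k)) i) ^+ 2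
    <= (n i)%:R * sumlip2 lip i * e_xi_blk k i.
Proof.
rewrite Qmap_grad_block // [_ * sumlip2 _ _]mulrC -mulrA.
exact: grad_block_lipschitz.
Qed.

Local Notation nmax := (\max_(k < N) n k)%:R.

Lemma n_le_nmax i : (n i)%:R <= nmax :> R.
Proof. by rewrite ler_nat; apply: (leq_bigmax_cond (F := n) i). Qed.

Lemma broadcast_err_le k :
  \sum_(a : agt) (xbar u (x k) (tag a) - ys (tag a)) ^+ 2 <= nmax * e_xbar_sq u ys (x k).
Proof.
rewrite sum_agent /e_xbar_sq mulr_sumr; apply: ler_sum => i _.
rewrite /= sumr_const card_ord -[_ *+ n i]mulr_natl.
by apply: ler_wpM2r; [exact: sqr_ge0 | exact: n_le_nmax].
Qed.

Lemma xi_ys_err k i :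
  \sum_(j < n i) \sum_(a : agt) (xi k (ag i j) a - ys (tag a)) ^+ 2
    <= (n i)%:R * ((n i)%:R^-1 + nmax) * (e_xi_blk k i + e_xbar_sq u ys (x k)).
Proof.
set nn := (n i)%:R; have nn0 : 0 < nn by rewrite ltr0n.
have M0 : 0 < nmax :> R := lt_le_trans nn0 (n_le_nmax i).
(* This weight gives both error terms the common factor n_i (1/n_i + max_k n_k) of [b0]. *)
set s := nn * nmax; have s0 : 0 < s by rewrite mulr_gt0.
rewrite [leRHS](_ : _ = (1 + s) * e_xi_blk k i
                        + nn * ((1 + s^-1) * (nmax * e_xbar_sq u ys (x k)))); last first.
  by rewrite /s; field; rewrite !gt_eqF.
apply: le_trans (_ : _ <= \sum_(j < n i)
    ((1 + s) * \sum_(a : agt) (xi k (ag i j) a - xbar u (x k) (tag a)) ^+ 2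
     + (1 + s^-1) * \sum_(a : agt) (xbar u (x k) (tag a) - ys (tag a)) ^+ 2)) _.
  apply: ler_sum => j _; rewrite !mulr_sumr -big_split /=; apply: ler_sum => a _.
  by rewrite -(subrKA (xbar u (x k) (tag a))); apply: sqrD_le_split.
rewrite big_split /= -mulr_sumr sumr_const card_ord -[_ *+ n i]mulr_natl lerD2l.
by rewrite ler_pM2l //; apply: ler_wpM2l (broadcast_err_le k); rewrite addr_ge0 // invr_ge0 ltW.
Qed.

Lemma psibar_sum_bound k i : psibar_sum k i ^+ 2
  <= sumlip2 lip i * ((n i)%:R^-1 + nmax) * (e_xi_blk k i + e_xbar_sq u ys (x k)).
Proof.
have nn0 : 0 < (n i)%:R :> R by rewrite ltr0n.
rewrite -(ler_pM2l (exprn_gt0 2 nn0)) -exprMn psibar_sum_grad.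
rewrite [leRHS](_ : _ = sumlip2 lip i * ((n i)%:R * ((n i)%:R * ((n i)%:R^-1 + nmax)
                                          * (e_xi_blk k i + e_xbar_sq u ys (x k))))); last first.
  by field; rewrite gt_eqF.
have Q_ys : Qmap f ys i = 0 := Qmap_nash f f_partial f_partial_cont ys nash i.
rewrite -[grad_block _ _ _]subr0 -Q_ys Qmap_grad_block //.
apply: le_trans (grad_block_lipschitz f lip f_lip _ _ _) _.
apply: ler_wpM2l; first by apply: sumr_ge0 => j _; apply: sqr_ge0.
exact: ler_wpM2l (ler0n _ _) _ _ (xi_ys_err k i).
Qed.

Lemma utrack_bound k i : utrack k i ^+ 2
  <= rnorm_sq (u i) * b0 v lip i * (e_psi_blk k i + e_xi_blk k i + e_xbar_sq u ys (x k)).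
Proof.
have nn0 : 0 < (n i)%:R :> R by rewrite ltr0n.
have M0 : 0 < nmax :> R := lt_le_trans nn0 (n_le_nmax i).
have u0 : 0 <= rnorm_sq (u i) by apply: sumr_ge0 => j _; apply: sqr_ge0.
have v0 : 0 <= cnorm_sq (v i) by apply: sumr_ge0 => j _; apply: sqr_ge0.
have L0 : 0 <= sumlip2 lip i by apply: sumr_ge0 => j _; apply: sqr_ge0.
have uv_le : uv u v i ^+ 2 <= rnorm_sq (u i) * cnorm_sq (v i).
  by rewrite /uv mxE; apply: cauchy_schwarz.
set K := ((n i)%:R^-1 + nmax) * cnorm_sq (v i) * sumlip2 lip i.
have K0 : 0 <= K by rewrite !mulr_ge0 // addr_ge0 ?invr_ge0 ?ltW.
have -> : rnorm_sq (u i) * b0 v lip i * (e_psi_blk k i + e_xi_blk k i + e_xbar_sq u ys (x k))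
  = (rnorm_sq (u i) * (n i)%:R + rnorm_sq (u i) * K)
    * (e_psi_blk k i + (e_xi_blk k i + e_xbar_sq u ys (x k))) by rewrite /b0 -/K; ring.
rewrite utrack_split; apply: sqrD_le_mulD;
  rewrite ?mulr_ge0 ?addr_ge0 ?invr_ge0 ?e_psi_blk_ge0 ?e_xi_blk_ge0 ?e_xbar_sq_ge0 ?ler0n //.
  by rewrite -mulrA; apply: utrack_dev_bound.
rewrite exprMn [leRHS](_ : _ = rnorm_sq (u i) * cnorm_sq (v i) * (sumlip2 lip i
         * ((n i)%:R^-1 + nmax) * (e_xi_blk k i + e_xbar_sq u ys (x k)))); last by rewrite /K; ring.
exact: ler_pM (sqr_ge0 _) (sqr_ge0 _) uv_le (psibar_sum_bound k i).
Qed.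

Lemma Vxbar_blk_diff k i :
  (n i)%:R ^+ 3 / (alpha * uv u v i) *
    ((xbar u (x k.+1) i - ys i) ^+ 2 - (xbar u (x k) i - ys i) ^+ 2)
  = - 2 * (xbar u (x k) i - ys i)
        * (grad_block f i (fun j => xi k (ag i j)) + (n i)%:R * utrack_dev k i / uv u v i)
    + alpha / ((n i)%:R * uv u v i) * utrack k i ^+ 2.
Proof.
have nn0 : 0 < (n i)%:R :> R by rewrite ltr0n.
rewrite xbar_step -psibar_sum_grad utrack_split.
by field; rewrite !gt_eqF ?uv_gt0.
Qed.

Lemma Vxbar_blk_step k i :
  (n i)%:R ^+ 3 / (alpha * uv u v i) *
    ((xbar u (x k.+1) i - ys i) ^+ 2 - (xbar u (x k) i - ys i) ^+ 2)
  <= - 2 * (xbar u (x k) i - ys i) * Qmap f (xbar u (x k)) i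
     + l * (xbar u (x k) i - ys i) ^+ 2
     + 2 / l * ((n i)%:R ^+ 3 * rnorm_sq (u i) / uv u v i ^+ 2) * e_psi_blk k i
     + 2 / l * ((n i)%:R * sumlip2 lip i) * e_xi_blk k i
     + alpha * b1 u v lip i * (e_psi_blk k i + e_xi_blk k i + e_xbar_sq u ys (x k)).
Proof.
set e := xbar u (x k) i - ys i; set Q := Qmap f (xbar u (x k)) i.
set nn := (n i)%:R; have nn0 : 0 < nn by rewrite ltr0n.
set w := uv u v i; have w0 : 0 < w := uv_gt0 i.
set G := grad_block f i (fun j => xi k (ag i j)); set A := utrack_dev k i.
have l2 : 0 <= 2 / l by rewrite divr_ge0 ?ltW.
have young_G := young_ineq e (G - Q) l_gt0.
have young_A := young_ineq e (nn * A / w) l_gt0.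
have bound_G : 2 / l * (G - Q) ^+ 2 <= 2 / l * (nn * sumlip2 lip i) * e_xi_blk k i.
  by rewrite -[leRHS]mulrA; apply: ler_wpM2l l2 _ _ (grad_track_err k i).
have bound_A : 2 / l * (nn * A / w) ^+ 2
    <= 2 / l * (nn ^+ 3 * rnorm_sq (u i) / w ^+ 2) * e_psi_blk k i.
  rewrite -[leRHS]mulrA; apply: ler_wpM2l l2 _ _ _.
  rewrite (_ : (nn * A / w) ^+ 2 = nn ^+ 2 / w ^+ 2 * A ^+ 2); last by rewrite !exprMn exprVn; ring.
  rewrite [leRHS](_ : _ = nn ^+ 2 / w ^+ 2 * (rnorm_sq (u i) * (nn * e_psi_blk k i))); last first.
    by field; rewrite gt_eqF.
  by apply: ler_wpM2l (utrack_dev_bound k i); rewrite divr_ge0 ?sqr_ge0.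
have bound_S : alpha / (nn * w) * utrack k i ^+ 2
    <= alpha * b1 u v lip i * (e_psi_blk k i + e_xi_blk k i + e_xbar_sq u ys (x k)).
  rewrite [leRHS](_ : _ = alpha / (nn * w) * (rnorm_sq (u i) * b0 v lip i
                            * (e_psi_blk k i + e_xi_blk k i + e_xbar_sq u ys (x k)))); last first.
    by rewrite /b1 -/nn -/w; field; rewrite !gt_eqF.
  by apply: ler_wpM2l (utrack_bound k i); rewrite divr_ge0 ?ltW ?mulr_gt0.
rewrite Vxbar_blk_diff -/e -/nn -/w -/G -/A; lra.
Qed.

Lemma e_psi_sq_blocks k : e_psi_sq v (psi k) = \sum_(i < N) e_psi_blk k i.
Proof. by []. Qed.

Lemma e_xi_sq_blocks k : e_xi_sq u (x k) (xi k) = \sum_(i < N) e_xi_blk k i.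
Proof. exact: sum_agent. Qed.

Lemma xbar_Qmap_ge k :
  l * e_xbar_sq u ys (x k) <= \sum_(i < N) (xbar u (x k) i - ys i) * Qmap f (xbar u (x k)) i.
Proof.
apply: le_trans (Q_strong_mono (xbar u (x k)) ys) _; apply: ler_sum => i _.
by rewrite (Qmap_nash f f_partial f_partial_cont ys nash i) subr0.
Qed.

Lemma Vxbar_step k :
  Vxbar u v alpha ys (x k.+1) - Vxbar u v alpha ys (x k)
    <= - l * e_xbar_sq u ys (x k)
       + beta_xpsi l u v * e_psi_sq v (psi k)
       + beta_xxi l lip * e_xi_sq u (x k) (xi k)
       + alpha * \big[Num.max/0]_(i < N) b1 u v lip i
           * (e_psi_sq v (psi k) + e_xi_sq u (x k) (xi k) + N%:R * e_xbar_sq u ys (x k)).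
Proof.
set Ex := e_xbar_sq u ys (x k); set b1max := \big[Num.max/0]_(i < N) b1 u v lip i.
have l2 : 0 <= 2 / l by rewrite divr_ge0 ?ltW.
rewrite /Vxbar -sumrB; apply: le_trans (_ : _ <= \sum_(i < N)
    (- 2 * (xbar u (x k) i - ys i) * Qmap f (xbar u (x k)) i + l * (xbar u (x k) i - ys i) ^+ 2
     + beta_xpsi l u v * e_psi_blk k i + beta_xxi l lip * e_xi_blk k i
     + alpha * b1max * (e_psi_blk k i + e_xi_blk k i + Ex))) _.
  apply: ler_sum => i _; rewrite -mulrBr; apply: le_trans (Vxbar_blk_step k i) _.
  rewrite /beta_xpsi /beta_xxi -/b1max.
  repeat apply: lerD => //; apply: ler_wpM2r;
    rewrite ?addr_ge0 ?e_psi_blk_ge0 ?e_xi_blk_ge0 ?e_xbar_sq_ge0 //.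
  - by apply: ler_wpM2l l2 _ _ _; apply: le_bigmax.
  - by apply: ler_wpM2l l2 _ _ _; apply: le_bigmax.
  - by apply: ler_wpM2l (ltW alpha_gt0) _ _ _; apply: le_bigmax.
have sum_eQ : \sum_(i < N) - 2 * (xbar u (x k) i - ys i) * Qmap f (xbar u (x k)) i
    = - 2 * \sum_(i < N) (xbar u (x k) i - ys i) * Qmap f (xbar u (x k)) i.
  by rewrite mulr_sumr; apply: eq_bigr => i _; rewrite mulrA.
have := xbar_Qmap_ge k; rewrite -/Ex e_xi_sq_blocks !big_split /= -!mulr_sumr !big_split /=.
rewrite sumr_const card_ord -[Ex *+ N]mulr_natl sum_eQ -/(e_xbar_sq u ys (x k)) -/Ex.
rewrite e_psi_sq_blocks; lra.
Qed.

End Algorithm.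

Theorem lemma2 (R : realType) (N : nat) (n : 'I_N -> nat)
  (E : rel (agent N n))
  (f : agent N n -> (agent N n -> R) -> R) (lip : agent N n -> R) (l : R)
  (Rm Cm : forall i : 'I_N, 'M[R]_(n i))
  (u : forall i : 'I_N, 'rV[R]_(n i)) (v : forall i : 'I_N, 'cV[R]_(n i))
  (ys : 'I_N -> R) (alpha : R)
  (x : nat -> agent N n -> R) (xi : nat -> agent N n -> agent N n -> R)
  (psi : nat -> forall a : agent N n, 'I_(n (tag a)) -> R) :
  (* coalitions are nonempty *)
  (forall i, (0 < n i)%N) ->
  (* (A1) *)
  strongly_connected E ->
  (forall i : 'I_N, strongly_connected [rel j m : 'I_(n i) | E (ag i j) (ag i m)]) ->
  (* (A2) *)
  (forall a, convex_fun (f a) /\ C2 (f a) /\ grad_lipschitz (f a) (lip a)) ->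
  (* (A3) *)
  0 < l ->
  (forall a b : 'I_N -> R,
     l * \sum_(i < N) (a i - b i) ^+ 2
       <= \sum_(i < N) (a i - b i) * (Qmap f a i - Qmap f b i)) ->
  (* y* is the Nash equilibrium *)
  nash_eq f ys ->
  (* weights R_i (row stochastic on in-neighbours + self) *)
  (forall i (j m : 'I_(n i)),
     if (m == j) || E (ag i m) (ag i j) then 0 < Rm i j m else Rm i j m == 0) ->
  (forall i (j : 'I_(n i)), \sum_(m < n i) Rm i j m = 1) ->
  (* weights C_i: c_{im}^{ij} = Cm i m j (column stochastic on out-neighbours + self) *)
  (forall i (j m : 'I_(n i)),
     if (m == j) || E (ag i j) (ag i m) then 0 < Cm i m j else Cm i m j == 0) ->
  (forall i (j : 'I_(n i)), \sum_(m < n i) Cm i m j = 1) ->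
  (* u_i, v_i *)
  (forall i, u i *m Rm i = u i /\ \sum_(j < n i) u i 0 j = (n i)%:R) ->
  (forall i, Cm i *m v i = v i /\ \sum_(j < n i) v i j 0 = (n i)%:R) ->
  0 < alpha ->
  trajectory E f Rm Cm alpha x xi psi ->
  forall k : nat,
    Vxbar u v alpha ys (x k.+1) - Vxbar u v alpha ys (x k)
      <= - l * e_xbar_sq u ys (x k)
         + beta_xpsi l u v * e_psi_sq v (psi k)
         + beta_xxi l lip * e_xi_sq u (x k) (xi k)
         + alpha * \big[Num.max/0]_(i < N) b1 u v lip i
             * (e_psi_sq v (psi k) + e_xi_sq u (x k) (xi k)
                + N%:R * e_xbar_sq u ys (x k)).
Proof.
move=> n_gt0 _ E_conn hA2 l_gt0 Q_mono nash Rm_pat Rm_row1 Cm_pat Cm_col1 u_eig v_eig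
  alpha_gt0 traj k.
have f_partial a : forall p y, has_partial (f a) p y by have [_ [[]]] := hA2 a.
have f_partial_cont a : forall p, fcontinuous (partial (f a) p) by have [_ [[]]] := hA2 a.
have f_lip a : grad_lipschitz (f a) (lip a) by have [_ []] := hA2 a.
by apply: Vxbar_step => //; exact: traj.
Qed.
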